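(* Let $X$ be a compact nonpositively curved cube complex and $(\tilde Y,\phi)$ a quasiline in $\tilde X$. Then for each hyperplane $H$ of $\tilde Y$: (1) $H$ is trivial if and only if $\operatorname{diam}(H)=\infty$; (2) $H$ is half-essential if and only if it has a compact halfspace; (3) $H$ is essential if and only if $\operatorname{diam}(H)<\infty$ and both halfspaces of $H$ are noncompact.
   Context: $\tilde X$ is the universal cover of $X$. A quasiline in $\tilde X$ is a pair $(\tilde Y,\phi)$ with $\tilde Y\subset\tilde X$ a convex subcomplex and $\phi\in\pi_1X$ nontrivial such that $\langle\phi\rangle$ acts cocompactly on $\tilde Y$. Hyperplanes of $\tilde Y$ and their two halfspaces (components of the complement of the open carrier) are taken in the CAT(0) cube complex $\tilde Y$. A halfspace of $H$ is deep if it contains points arbitrarily far from $H$, shallow otherwise. $H$ is essential if both halfspaces are deep, trivial if both are shallow, half-essential if exactly one is deep. *)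

(* Combinatorial model of CAT(0) cube complexes via their
   1-skeleta (median graphs, Chepoi/Roller). *)
From Stdlib Require Import List Arith.

Inductive walk {V : Type} (adj : V -> V -> Prop) : V -> V -> nat -> Prop :=
| walk0 : forall x, walk adj x x 0
| walkS : forall x y z n, adj x y -> walk adj y z n -> walk adj x z (S n).

Definition is_dist {V : Type} (adj : V -> V -> Prop) (x y : V) (n : nat) : Prop :=
  walk adj x y n /\ forall k, walk adj x y k -> n <= k.

Definition between {V : Type} (adj : V -> V -> Prop) (x m y : V) : Prop :=
  exists p q n, is_dist adj x m p /\ is_dist adj m y q /\ is_dist adj x y n /\ p + q = n.

Definition is_median {V : Type} (adj : V -> V -> Prop) (x y z m : V) : Prop :=
  between adj x m y /\ between adj y m z /\ between adj x m z.

(* median graph = 1-skeleton of a CAT(0) cube complex *)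
Definition median_graph {V : Type} (adj : V -> V -> Prop) : Prop :=
  (forall x y, adj x y -> adj y x) /\
  (forall x, ~ adj x x) /\
  (forall x y, exists n, walk adj x y n) /\
  (forall x y z, exists m, is_median adj x y z m /\
                           forall m', is_median adj x y z m' -> m' = m).

Definition locally_finite {V : Type} (adj : V -> V -> Prop) : Prop :=
  forall x, exists l : list V, forall y, adj x y -> In y l.

Record group := Group {
  gcar :> Type;
  gmul : gcar -> gcar -> gcar;
  gone : gcar;
  ginv : gcar -> gcar;
  gmulA : forall x y z, gmul x (gmul y z) = gmul (gmul x y) z;
  gmul1 : forall x, gmul gone x = x;
  gmulV : forall x, gmul (ginv x) x = gone }.

Fixpoint gpow (G : group) (g : G) (n : nat) : G :=
  match n with 0 => gone G | S k => gmul G g (gpow G g k) end.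

Definition graph_action {V : Type} (adj : V -> V -> Prop) (G : group)
    (act : G -> V -> V) : Prop :=
  (forall v, act (gone G) v = v) /\
  (forall g h v, act (gmul G g h) v = act g (act h v)) /\
  (forall g x y, adj x y <-> adj (act g x) (act g y)).

(* Data of a compact nonpositively curved cube complex X:
   its universal cover Xtilde (given by its 1-skeleton, a median graph)
   together with pi_1 X = G acting by deck transformations, i.e. freely
   and cocompactly by cubical automorphisms, X = Xtilde / G.  Freeness on
   the whole complex = free on vertices + torsion-free (a cube stabiliser
   would be a finite-order element).  Compactness of X = local finiteness
   + finitely many G-orbits of vertices. *)
Definition compact_npc_universal_cover {V : Type} (adj : V -> V -> Prop)
    (G : group) (act : G -> V -> V) : Prop :=
  median_graph adj /\
  locally_finite adj /\
  graph_action adj G act /\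
  (forall g v, act g v = v -> g = gone G) /\
  (forall g n, 0 < n -> gpow G g n = gone G -> g = gone G) /\
  (exists reps : list V, forall v, exists g r, In r reps /\ v = act g r).

Definition convex_sub {V : Type} (adj : V -> V -> Prop) (Y : V -> Prop) : Prop :=
  forall x y m, Y x -> Y y -> between adj x m y -> Y m.

Definition quasiline {V : Type} (adj : V -> V -> Prop) (G : group)
    (act : G -> V -> V) (Y : V -> Prop) (phi : G) : Prop :=
  phi <> gone G /\
  (exists y, Y y) /\
  convex_sub adj Y /\
  (forall y, Y y -> Y (act phi y)) /\
  (forall y, Y y -> exists x, Y x /\ act phi x = y) /\
  (* <phi> acts cocompactly on Y: finitely many <phi>-orbits (Z-orbits) *)
  (exists reps : list V, forall y, Y y ->
     exists r n, In r reps /\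
       (y = Nat.iter n (act phi) r \/ r = Nat.iter n (act phi) y)).

(* ---------- hyperplanes of Y (Djokovic-Winkler classes of edges) ---------- *)

Definition theta {V : Type} (adj : V -> V -> Prop) (a b c d : V) : Prop :=
  exists p q r s, is_dist adj a c p /\ is_dist adj b d q /\
                  is_dist adj a d r /\ is_dist adj b c s /\ p + q <> r + s.

(* v is a vertex of the carrier of the hyperplane of Y dual to the edge (a,b) *)
Definition hp_vertex {V : Type} (adj : V -> V -> Prop) (Y : V -> Prop)
    (a b v : V) : Prop :=
  exists c d, Y c /\ Y d /\ adj c d /\ theta adj a b c d /\ (v = c \/ v = d).

Definition halfspace {V : Type} (adj : V -> V -> Prop) (Y : V -> Prop)
    (a b v : V) : Prop :=
  Y v /\ exists p q, is_dist adj v a p /\ is_dist adj v b q /\ p < q.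

Definition deep_halfspace {V : Type} (adj : V -> V -> Prop) (Y : V -> Prop)
    (a b : V) : Prop :=
  forall n, exists v, halfspace adj Y a b v /\
    forall u p, hp_vertex adj Y a b u -> is_dist adj v u p -> n <= p.

Definition essential_hp {V : Type} adj (Y : V -> Prop) (a b : V) : Prop :=
  deep_halfspace adj Y a b /\ deep_halfspace adj Y b a.
Definition trivial_hp {V : Type} adj (Y : V -> Prop) (a b : V) : Prop :=
  ~ deep_halfspace adj Y a b /\ ~ deep_halfspace adj Y b a.
Definition half_essential_hp {V : Type} adj (Y : V -> Prop) (a b : V) : Prop :=
  (deep_halfspace adj Y a b /\ ~ deep_halfspace adj Y b a) \/
  (~ deep_halfspace adj Y a b /\ deep_halfspace adj Y b a).

Definition finite_diam_hp {V : Type} (adj : V -> V -> Prop) (Y : V -> Prop)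
    (a b : V) : Prop :=
  exists n, forall u w p, hp_vertex adj Y a b u -> hp_vertex adj Y a b w ->
    is_dist adj u w p -> p <= n.

(* compact halfspace (locally finite complex): finitely many vertices *)
Definition compact_halfspace {V : Type} (adj : V -> V -> Prop) (Y : V -> Prop)
    (a b : V) : Prop :=
  exists l : list V, forall v, halfspace adj Y a b v -> In v l.

From Pilot Require Import Defs.
From Stdlib Require Import List Arith Lia Classical ClassicalEpsilon FinFun.
Import ListNotations.

(* The halfspaces of the hyperplane dual to an edge (a, b) of the median graph are
   Djokovic's sets W(a, b) of vertices closer to a than to b.  If the carrier of the
   hyperplane is bounded, local finiteness makes a halfspace compact exactly when it is
   shallow, and the two halfspaces cannot both be shallow since Y contains an infinite
   <phi>-orbit.  If the carrier is unbounded, cocompactness of <phi> on Y moves infinitely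
   many far carrier edges into a fixed ball around a, so two translates phi^i H and phi^j H
   cross a common edge and therefore coincide.  Then a power of phi preserves both
   halfspaces: Y lies in a bounded neighbourhood of the carrier, so H is trivial, and each
   halfspace contains an infinite orbit, so neither is compact. *)

Lemma injective_not_listed {A : Type} (f : nat -> A) (l : list A) :
  Injective f -> ~ (forall k, In (f k) l).
Proof.
  intros Hf Hl.
  assert (Hlen : length (map f (seq 0 (S (length l)))) <= length l).
  { apply NoDup_incl_length.
    - apply Injective_map_NoDup; [exact Hf | apply seq_NoDup].
    - intros x Hx. apply in_map_iff in Hx as [k [<- _]]. apply Hl. }
  rewrite length_map, length_seq in Hlen. lia.
Qed.

Lemma le_list_max {A : Type} (f : A -> nat) (l : list A) x :
  In x l -> f x <= list_max (map f l).
Proof.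
  intro Hx.
  assert (Hall := proj1 (list_max_le (map f l) _) (le_n _)).
  rewrite Forall_forall in Hall. apply Hall, in_map, Hx.
Qed.

Lemma infinitely_often_in_list {A : Type} (l : list A) (R : A -> nat -> Prop) :
  (forall N, exists x t, In x l /\ N <= t /\ R x t) ->
  exists x, In x l /\ forall N, exists t, N <= t /\ R x t.
Proof.
  induction l as [|x l IH]; intro Hoften.
  - destruct (Hoften 0) as (x & t & [] & _).
  - destruct (classic (forall N, exists t, N <= t /\ R x t)) as [Hx | Hx].
    + exists x. split; [left; reflexivity | exact Hx].
    + apply not_all_ex_not in Hx as [N0 HN0].
      destruct IH as (y & Hy & Hy_often).
      * intro N. destruct (Hoften (max N N0)) as (y & t & [<- | Hy] & Ht & HR).
        -- exfalso. apply HN0. exists t. split; [lia | exact HR].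
        -- exists y, t. repeat split; [exact Hy | lia | exact HR].
      * exists y. split; [right; exact Hy | exact Hy_often].
Qed.

Lemma gmulVr (G : group) (g : G) : gmul G g (ginv G g) = gone G.
Proof.
  set (h := ginv G g).
  rewrite <- (gmul1 G (gmul G g h)), <- (gmulV G h) at 1.
  rewrite <- gmulA, (gmulA G h g h).
  unfold h at 2. rewrite gmulV, gmul1. apply gmulV.
Qed.

Section MedianGraph.
Context {V : Type} (adj : V -> V -> Prop).
Hypothesis Hmed : median_graph adj.
Hypothesis Hlf : locally_finite adj.
Variable Y : V -> Prop.

Lemma adj_sym x y : adj x y -> adj y x.
Proof. apply Hmed. Qed.

Lemma adj_irrefl x : ~ adj x x.
Proof. apply Hmed. Qed.

Lemma walk_app x y z m n : walk adj x y m -> walk adj y z n -> walk adj x z (m + n).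
Proof.
  induction 1 as [x | x x' y m Hxx' _ IH]; intro Hyz; [exact Hyz|].
  exact (walkS adj _ _ _ _ Hxx' (IH Hyz)).
Qed.

Lemma walk_rev x y n : walk adj x y n -> walk adj y x n.
Proof.
  induction 1 as [x | x x' y n Hxx' _ IH]; [constructor|].
  rewrite <- Nat.add_1_r. apply (walk_app _ x'); [exact IH|].
  exact (walkS adj _ _ _ _ (adj_sym _ _ Hxx') (walk0 adj x)).
Qed.

Lemma walk_map (f : V -> V) x y n : (forall u v, adj u v -> adj (f u) (f v)) ->
  walk adj x y n -> walk adj (f x) (f y) n.
Proof.
  intros Hf. induction 1 as [x | x x' y n Hxx' _ IH]; [constructor|].
  exact (walkS adj _ _ _ _ (Hf _ _ Hxx') IH).
Qed.

Definition dist (x y : V) : nat := epsilon (inhabits 0) (is_dist adj x y).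

Lemma dist_spec x y : is_dist adj x y (dist x y).
Proof.
  unfold dist. apply epsilon_spec.
  destruct Hmed as (_ & _ & Hconn & _).
  destruct (dec_inh_nat_subset_has_unique_least_element (walk adj x y)
              (fun n => classic _) (Hconn x y)) as [n [Hn _]].
  exists n; exact Hn.
Qed.

Lemma walk_dist x y : walk adj x y (dist x y).
Proof. apply dist_spec. Qed.

Lemma dist_le_walk x y n : walk adj x y n -> dist x y <= n.
Proof. apply dist_spec. Qed.

Lemma is_dist_iff x y n : is_dist adj x y n <-> n = dist x y.
Proof.
  split.
  - intros [Hwalk Hmin].
    pose proof (Hmin _ (walk_dist x y)). pose proof (dist_le_walk _ _ _ Hwalk). lia.
  - intros ->. apply dist_spec.
Qed.

Lemma dist_sym x y : dist x y = dist y x.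
Proof.
  pose proof (dist_le_walk _ _ _ (walk_rev _ _ _ (walk_dist x y))).
  pose proof (dist_le_walk _ _ _ (walk_rev _ _ _ (walk_dist y x))). lia.
Qed.

Lemma dist_triangle x y z : dist x z <= dist x y + dist y z.
Proof. apply dist_le_walk, (walk_app _ y); apply walk_dist. Qed.

Lemma dist_refl x : dist x x = 0.
Proof. pose proof (dist_le_walk _ _ _ (walk0 adj x)). lia. Qed.

Lemma dist_eq0 x y : dist x y = 0 -> x = y.
Proof. intro H. pose proof (walk_dist x y) as Hw. rewrite H in Hw. now inversion Hw. Qed.

Lemma dist_adj x y : adj x y -> dist x y = 1.
Proof.
  intro Hxy. pose proof (dist_le_walk x y 1 (walkS adj _ _ _ _ Hxy (walk0 adj y))).
  destruct (dist x y) eqn:E; [|lia].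
  apply dist_eq0 in E; subst. exfalso; exact (adj_irrefl _ Hxy).
Qed.

Lemma dist_step x y n : dist x y = S n -> exists z, adj x z /\ dist z y = n.
Proof.
  intro H. pose proof (walk_dist x y) as Hw. rewrite H in Hw.
  inversion Hw as [| ? z ? ? Hxz Hzy]; subst.
  exists z. split; [exact Hxz|].
  pose proof (dist_le_walk _ _ _ Hzy). pose proof (dist_triangle x z y).
  rewrite (dist_adj _ _ Hxz) in *. lia.
Qed.

Lemma dist1_adj x y : dist x y = 1 -> adj x y.
Proof.
  intro H. destruct (dist_step _ _ _ H) as [z [Hxz Hz]].
  apply dist_eq0 in Hz. subst. exact Hxz.
Qed.

Lemma dist_neighbour_le v x y : adj x y -> dist v x <= S (dist v y).
Proof.
  intro Hxy. pose proof (dist_triangle v y x).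
  rewrite (dist_sym y x), (dist_adj _ _ Hxy) in *. lia.
Qed.

Lemma dist_map_le (f : V -> V) x y : (forall u v, adj u v -> adj (f u) (f v)) ->
  dist (f x) (f y) <= dist x y.
Proof. intro Hf. apply dist_le_walk, walk_map, walk_dist; exact Hf. Qed.

Definition median_of x y z m :=
  dist x m + dist m y = dist x y /\ dist y m + dist m z = dist y z /\
  dist x m + dist m z = dist x z.

Lemma between_iff x m y : Defs.between adj x m y <-> dist x m + dist m y = dist x y.
Proof.
  split.
  - intros (p & q & n & Hp & Hq & Hn & E). apply is_dist_iff in Hp, Hq, Hn. congruence.
  - intro E. exists (dist x m), (dist m y), (dist x y). repeat split; try apply dist_spec; auto.
Qed.

Lemma median_unique x y z :
  exists m, median_of x y z m /\ forall m', median_of x y z m' -> m' = m.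
Proof.
  destruct Hmed as (_ & _ & _ & Hmedian).
  destruct (Hmedian x y z) as [m [(B1 & B2 & B3) Hm]].
  rewrite between_iff in B1, B2, B3.
  exists m. split; [repeat split; assumption|].
  intros m' (E1 & E2 & E3). apply Hm. repeat split; apply between_iff; assumption.
Qed.

Lemma dist_adj_neq a b v : adj a b -> dist v a <> dist v b.
Proof.
  intros Hab E. destruct (median_unique a b v) as [m [(E1 & E2 & E3) _]].
  rewrite (dist_adj _ _ Hab) in E1.
  rewrite (dist_sym v a), (dist_sym v b) in E.
  assert (dist a m = 0 \/ dist m b = 0) as [Z | Z] by lia; apply dist_eq0 in Z; subst m.
  - rewrite (dist_sym b a), (dist_adj _ _ Hab) in E2. lia.
  - rewrite (dist_adj _ _ Hab) in E3. lia.
Qed.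

Lemma dist_adj_cases a b v : adj a b -> dist v b = S (dist v a) \/ dist v a = S (dist v b).
Proof.
  intro Hab. pose proof (dist_adj_neq a b v Hab).
  pose proof (dist_neighbour_le v a b Hab). pose proof (dist_neighbour_le v b a (adj_sym _ _ Hab)).
  lia.
Qed.

Lemma dist_common_neighbour z x y : adj z x -> adj z y -> x <> y -> dist x y = 2.
Proof.
  intros Hzx Hzy Hxy. pose proof (dist_triangle x z y) as Htri.
  rewrite (dist_sym x z), (dist_adj _ _ Hzx), (dist_adj _ _ Hzy) in Htri.
  destruct (dist x y) as [| [| [|k]]] eqn:E; try lia.
  - apply dist_eq0 in E. contradiction.
  - apply dist1_adj in E. exfalso. apply (dist_adj_neq x y z E).
    rewrite (dist_adj _ _ Hzx), (dist_adj _ _ Hzy). reflexivity.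
Qed.

Lemma no_K23 z z' x y w : z <> z' ->
  adj z x -> adj z y -> adj z w -> adj z' x -> adj z' y -> adj z' w ->
  x <> y -> x <> w -> y <> w -> False.
Proof.
  intros Hzz' Hzx Hzy Hzw Hz'x Hz'y Hz'w Hxy Hxw Hyw.
  assert (Hmedian : forall c, adj c x -> adj c y -> adj c w -> median_of x y w c).
  { intros c Hcx Hcy Hcw. unfold median_of.
    rewrite (dist_sym x c), (dist_sym y c), (dist_adj _ _ Hcx), (dist_adj _ _ Hcy),
      (dist_adj _ _ Hcw), (dist_common_neighbour c x y), (dist_common_neighbour c y w),
      (dist_common_neighbour c x w) by assumption.
    auto. }
  destruct (median_unique x y w) as [m [_ Hm]].
  apply Hzz'. rewrite (Hm z), (Hm z'); auto.
Qed.

Lemma quadrangle x z z' y : adj x z -> adj x z' -> z <> z' -> dist y z = dist y z' ->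
  exists w, adj z w /\ adj z' w /\ S (dist y w) = dist y z.
Proof.
  intros Hxz Hxz' Hzz' Heq.
  destruct (median_unique z z' y) as [w [(E1 & E2 & E3) _]].
  rewrite (dist_common_neighbour x z z') in E1 by assumption.
  rewrite (dist_sym z' y), (dist_sym z y), (dist_sym w z') in *.
  exists w. repeat split; try (apply dist1_adj; lia).
  rewrite (dist_sym y w). lia.
Qed.

(* If the edge (x, x') is Theta-related to (a, b), with x on the side of a, then no vertex
   on the side of a is closer to x' than to x.  Induction on the distance from x to a: a
   neighbour x2 of x' one step closer to b and the median z of x, x2, a form a parallel edge
   (z, x2) one step closer to (a, b); if the claim fails for y at (x, x') but holds at
   (z, x2), then z and x' have three common neighbours. *)
Lemma theta_side_aux k : forall a b x x' y, adj a b -> adj x x' ->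
  dist x a = k -> dist x b = S k -> dist x' b = k -> dist x' a = S k ->
  dist y b = S (dist y a) -> S (dist y x') = dist y x -> False.
Proof.
  induction k as [|k IH]; intros a b x x' y Hab Hxx' Hxa Hxb Hx'b Hx'a Hy Hyx.
  - apply dist_eq0 in Hxa, Hx'b. subst x x'. lia.
  - destruct (dist_step x' b k Hx'b) as [x2 [Hx'x2 Hx2b]].
    assert (Hx2a : dist x2 a = S k).
    { pose proof (dist_triangle x2 b a). pose proof (dist_neighbour_le a x' x2 Hx'x2).
      rewrite (dist_sym b a), (dist_adj _ _ Hab), (dist_sym a x'), (dist_sym a x2) in *. lia. }
    assert (Hxx2 : x <> x2) by (intros ->; lia).
    destruct (median_unique x x2 a) as [z [(M1 & M2 & M3) _]].
    rewrite (dist_common_neighbour x' x x2) in M1 by (auto using adj_sym).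
    rewrite (dist_sym x2 z) in *.
    assert (Hxz : adj x z) by (apply dist1_adj; lia).
    assert (Hx2z : adj x2 z) by (apply dist1_adj; rewrite dist_sym; lia).
    assert (Hza : dist z a = k) by lia.
    assert (Hzb : dist z b = S k).
    { pose proof (dist_neighbour_le b x z Hxz). pose proof (dist_triangle z a b).
      rewrite (dist_adj _ _ Hab), (dist_sym b x), (dist_sym b z) in *. lia. }
    destruct (classic (S (dist y x2) = dist y z)) as [Hcloser | Hnot].
    + exact (IH a b z x2 y Hab (adj_sym _ _ Hx2z) Hza Hzb Hx2b Hx2a Hy Hcloser).
    + pose proof (dist_adj_cases x' x2 y Hx'x2). pose proof (dist_adj_cases x z y Hxz).
      pose proof (dist_neighbour_le y z x2 (adj_sym _ _ Hx2z)).
      assert (Hyz : dist y z = dist y x') by lia.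
      assert (Hzx' : z <> x') by (intros ->; lia).
      destruct (quadrangle x z x' y Hxz Hxx' Hzx' Hyz) as [w [Hzw [Hx'w Hyw]]].
      apply (no_K23 z x' x x2 w); auto using adj_sym; intros ->; lia.
Qed.

Definition W a b v := dist v a < dist v b.

Lemma W_compl a b v : adj a b -> (W b a v <-> ~ W a b v).
Proof. unfold W. intro Hab. pose proof (dist_adj_neq a b v Hab). lia. Qed.

Lemma W_subset a b c d : adj a b -> adj c d -> W a b c -> W b a d ->
  forall v, W a b v -> W c d v.
Proof.
  unfold W. intros Hab Hcd Hc Hd v Hv. apply NNPP; intro Hnot.
  pose proof (dist_adj_cases a b c Hab). pose proof (dist_adj_cases a b d Hab).
  pose proof (dist_adj_cases c d a Hcd). pose proof (dist_adj_cases c d b Hcd).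
  pose proof (dist_adj_cases a b v Hab). pose proof (dist_adj_cases c d v Hcd).
  rewrite (dist_sym a c), (dist_sym a d), (dist_sym b c), (dist_sym b d) in *.
  apply (theta_side_aux (dist c a) a b c d v Hab Hcd); lia.
Qed.

Lemma W_eq_of_cross a b c d : adj a b -> adj c d -> W a b c -> W b a d ->
  forall v, W a b v <-> W c d v.
Proof.
  intros Hab Hcd Hc Hd v. split; [apply W_subset; assumption|].
  intro Hv. apply NNPP. rewrite <- (W_compl a b v Hab). intro Hv'.
  apply (W_compl c d v Hcd); [|exact Hv].
  exact (W_subset b a d c (adj_sym _ _ Hab) (adj_sym _ _ Hcd) Hd Hc v Hv').
Qed.

Definition crossing x y c d := (W x y c /\ W y x d) \/ (W y x c /\ W x y d).

Definition same_hp a b a' b' :=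
  (forall v, W a b v <-> W a' b' v) \/ (forall v, W a b v <-> W b' a' v).

Lemma same_hp_sym a b a' b' : adj a b -> adj a' b' -> same_hp a b a' b' -> same_hp a' b' a b.
Proof.
  intros Hab Ha'b' [E | E]; [left | right]; intro v; [rewrite E; reflexivity|].
  rewrite (W_compl a b v Hab), E, (W_compl a' b' v Ha'b').
  split; [tauto | apply NNPP].
Qed.

Lemma same_hp_of_crossing x y x' y' c d : adj x y -> adj x' y' -> adj c d ->
  crossing x y c d -> crossing x' y' c d -> same_hp x y x' y'.
Proof.
  intros Hxy Hx'y' Hcd Hcross Hcross'.
  assert (Hdc := adj_sym _ _ Hcd).
  assert (K : (forall v, W x y v <-> W c d v) \/ (forall v, W x y v <-> W d c v))
    by (destruct Hcross as [[] | []]; [left | right]; apply W_eq_of_cross; assumption).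
  assert (K' : (forall v, W x' y' v <-> W c d v) \/ (forall v, W x' y' v <-> W d c v))
    by (destruct Hcross' as [[] | []]; [left | right]; apply W_eq_of_cross; assumption).
  pose proof (fun v => W_compl c d v Hcd) as Ccd.
  pose proof (fun v => W_compl x' y' v Hx'y') as Cx'y'.
  destruct K as [K | K], K' as [K' | K']; [left | right | right | left]; intro v;
    specialize (K v); specialize (K' v); specialize (Ccd v); specialize (Cx'y' v); tauto.
Qed.

Lemma theta_iff_crossing a b c d : adj a b -> adj c d ->
  (theta adj a b c d <-> crossing a b c d).
Proof.
  intros Hab Hcd. unfold theta, crossing, W.
  pose proof (dist_adj_cases a b c Hab). pose proof (dist_adj_cases a b d Hab).
  pose proof (dist_adj_cases c d a Hcd). pose proof (dist_adj_cases c d b Hcd).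
  rewrite (dist_sym a c), (dist_sym a d), (dist_sym b c), (dist_sym b d) in *.
  split.
  - intros (p & q & r & s & Hp & Hq & Hr & Hs & N). apply is_dist_iff in Hp, Hq, Hr, Hs.
    subst. rewrite (dist_sym a c), (dist_sym a d), (dist_sym b c), (dist_sym b d) in *. lia.
  - intro C. exists (dist a c), (dist b d), (dist a d), (dist b c).
    repeat split; try apply dist_spec.
    rewrite (dist_sym a c), (dist_sym a d), (dist_sym b c), (dist_sym b d). lia.
Qed.

Lemma halfspace_iff a b v : halfspace adj Y a b v <-> Y v /\ W a b v.
Proof.
  unfold halfspace, W. split.
  - intros [Hv (p & q & Hp & Hq & Hpq)]. apply is_dist_iff in Hp, Hq. subst. auto.
  - intros [Hv Hlt]. split; [exact Hv|].
    exists (dist v a), (dist v b). repeat split; try apply dist_spec; exact Hlt.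
Qed.

Lemma halfspace_cover a b v : adj a b -> Y v -> halfspace adj Y a b v \/ halfspace adj Y b a v.
Proof.
  intros Hab Hv. rewrite !halfspace_iff, (W_compl a b v Hab).
  destruct (classic (W a b v)); tauto.
Qed.

Lemma hp_vertex_iff a b u : adj a b -> (hp_vertex adj Y a b u <->
  exists c d, Y c /\ Y d /\ adj c d /\ crossing a b c d /\ (u = c \/ u = d)).
Proof.
  intro Hab. unfold hp_vertex.
  split; intros (c & d & Hc & Hd & Hcd & Hcross & Hu); exists c, d;
    repeat split; try assumption; apply theta_iff_crossing; assumption.
Qed.

Lemma W_left a b : adj a b -> W a b a.
Proof. intro Hab. unfold W. rewrite dist_refl, (dist_adj _ _ Hab). lia. Qed.

Lemma hp_vertex_left a b : Y a -> Y b -> adj a b -> hp_vertex adj Y a b a.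
Proof.
  intros Ya Yb Hab. apply hp_vertex_iff; [exact Hab|].
  exists a, b. repeat split; auto.
  left. split; apply W_left; [exact Hab | apply adj_sym, Hab].
Qed.

Lemma hp_vertex_swap a b u : adj a b -> hp_vertex adj Y a b u -> hp_vertex adj Y b a u.
Proof.
  intros Hab Hu. apply hp_vertex_iff in Hu; [|exact Hab]. apply hp_vertex_iff; [apply adj_sym, Hab|].
  destruct Hu as (c & d & Hc & Hd & Hcd & Hcross & Hu).
  exists c, d. repeat split; auto. unfold crossing in *. tauto.
Qed.

Lemma finite_diam_swap a b : adj a b -> finite_diam_hp adj Y a b -> finite_diam_hp adj Y b a.
Proof.
  intros Hab [n Hn]. exists n. intros u w p Hu Hw. apply Hn; apply hp_vertex_swap;
    auto using adj_sym.
Qed.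

Lemma carrier_unbounded a b : ~ finite_diam_hp adj Y a b ->
  forall n, exists u, hp_vertex adj Y a b u /\ n <= dist a u.
Proof.
  intros Hunb n. apply NNPP; intro Hnear. apply Hunb. exists (n + n).
  intros u w p Hu Hw Hp. apply is_dist_iff in Hp. subst p.
  assert (dist a u < n) by (apply NNPP; intro; apply Hnear; exists u; split; [assumption | lia]).
  assert (dist a w < n) by (apply NNPP; intro; apply Hnear; exists w; split; [assumption | lia]).
  pose proof (dist_triangle u a w). rewrite (dist_sym u a) in *. lia.
Qed.

Lemma shallow_near_carrier a b : ~ deep_halfspace adj Y a b ->
  exists n, forall v, halfspace adj Y a b v -> exists u, hp_vertex adj Y a b u /\ dist v u < n.
Proof.
  intro Hshallow. apply NNPP; intro Hfar. apply Hshallow. intro n.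
  apply NNPP; intro Hn. apply Hfar. exists n.
  intros v Hv. apply NNPP; intro Hu. apply Hn. exists v. split; [exact Hv|].
  intros u p Hu' Hp. apply is_dist_iff in Hp. subst p.
  apply NNPP; intro Hlt. apply Hu. exists u. split; [exact Hu' | lia].
Qed.

Lemma not_deep_of_near_carrier a b K :
  (forall v, Y v -> exists u, hp_vertex adj Y a b u /\ dist v u <= K) ->
  ~ deep_halfspace adj Y a b.
Proof.
  intros Hnear Hdeep. destruct (Hdeep (S K)) as [v [Hv Hfar]].
  apply halfspace_iff in Hv. destruct (Hnear v (proj1 Hv)) as [u [Hu Hvu]].
  pose proof (Hfar u _ Hu (dist_spec v u)). lia.
Qed.

Lemma compact_not_deep a b : Y a -> Y b -> adj a b ->
  compact_halfspace adj Y a b -> ~ deep_halfspace adj Y a b.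
Proof.
  intros Ya Yb Hab [l Hl] Hdeep.
  destruct (Hdeep (S (list_max (map (fun v => dist v a) l)))) as [v [Hv Hfar]].
  pose proof (le_list_max (fun v => dist v a) l v (Hl v Hv)).
  pose proof (Hfar a _ (hp_vertex_left a b Ya Yb Hab) (dist_spec v a)). lia.
Qed.

Lemma ball_finite x n : exists l, forall y, dist x y <= n -> In y l.
Proof.
  induction n as [|n [l IH]].
  - exists [x]. intros y Hy. left. apply dist_eq0. lia.
  - assert (Hnbrs : exists l', forall z y, In z l -> adj z y -> In y l').
    { clear IH. induction l as [|z l [l' IHl]].
      - exists []. intros z y [].
      - destruct (Hlf z) as [lz Hlz]. exists (lz ++ l').
        intros z' y [<- | Hz'] Hz'y; apply in_or_app; eauto. }
    destruct Hnbrs as [l' Hl']. exists (l ++ l'). intros y Hy. apply in_or_app.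
    destruct (le_lt_dec (dist x y) n) as [Hle | Hlt]; [left; auto | right].
    assert (E : dist y x = S n) by (rewrite dist_sym; lia).
    destruct (dist_step _ _ _ E) as [z [Hyz Hzx]].
    apply (Hl' z y); [apply IH; rewrite dist_sym; lia | apply adj_sym, Hyz].
Qed.

Lemma shallow_compact a b : Y a -> Y b -> adj a b -> finite_diam_hp adj Y a b ->
  ~ deep_halfspace adj Y a b -> compact_halfspace adj Y a b.
Proof.
  intros Ya Yb Hab [M HM] Hshallow. destruct (shallow_near_carrier a b Hshallow) as [n Hn].
  destruct (ball_finite a (M + n)) as [l Hl]. exists l. intros v Hv. apply Hl.
  destruct (Hn v Hv) as [u [Hu Hvu]].
  pose proof (HM u a _ Hu (hp_vertex_left a b Ya Yb Hab) (dist_spec u a)).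
  pose proof (dist_triangle a u v). rewrite (dist_sym a u), (dist_sym u v) in *. lia.
Qed.

Lemma deep_iff_not_compact a b : Y a -> Y b -> adj a b -> finite_diam_hp adj Y a b ->
  (deep_halfspace adj Y a b <-> ~ compact_halfspace adj Y a b).
Proof.
  intros Ya Yb Hab Hfin. split.
  - intros Hdeep Hcpt. exact (compact_not_deep a b Ya Yb Hab Hcpt Hdeep).
  - intro Hnc. apply NNPP. intro Hshallow. exact (Hnc (shallow_compact a b Ya Yb Hab Hfin Hshallow)).
Qed.

Section Quasiline.
Context (G : group) (act : G -> V -> V).
Hypothesis Hact : graph_action adj G act.
Hypothesis Hfree : forall g v, act g v = v -> g = gone G.
Hypothesis Htf : forall g n, 0 < n -> gpow G g n = gone G -> g = gone G.
Variable phi : G.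
Hypothesis HQ : quasiline adj G act Y phi.

Definition shift (s : bool) (n : nat) : V -> V :=
  Nat.iter n (act (if s then phi else ginv G phi)).

Lemma shift_cancel s n v : shift (negb s) n (shift s n v) = v.
Proof.
  destruct Hact as (Hone & Hmul & _).
  induction n as [|n IH]; [reflexivity|].
  unfold shift in *. rewrite Nat.iter_succ_r. cbn [Nat.iter nat_rect].
  rewrite <- Hmul. destruct s; cbn [negb];
    [rewrite gmulV | rewrite gmulVr]; rewrite Hone; exact IH.
Qed.

Lemma shift_cancel_r s n v : shift s n (shift (negb s) n v) = v.
Proof. destruct s; exact (shift_cancel _ n v). Qed.

Lemma shift_add s i j v : shift s (i + j) v = shift s i (shift s j v).
Proof. apply Nat.iter_add. Qed.

Lemma shift_gap s i j v : i <= j -> shift (negb s) i (shift s j v) = shift s (j - i) v.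
Proof.
  intro Hij. replace j with (i + (j - i)) at 1 by lia.
  rewrite shift_add. apply shift_cancel.
Qed.

Lemma adj_shift s n x y : adj x y -> adj (shift s n x) (shift s n y).
Proof.
  destruct Hact as (_ & _ & Hadj).
  induction n as [|n IH]; intro Hxy; [exact Hxy|]. apply Hadj, IH, Hxy.
Qed.

Lemma dist_shift s n x y : dist (shift s n x) (shift s n y) = dist x y.
Proof.
  pose proof (dist_map_le (shift s n) x y (adj_shift s n)).
  pose proof (dist_map_le (shift (negb s) n) (shift s n x) (shift s n y) (adj_shift (negb s) n)).
  rewrite !shift_cancel in *. lia.
Qed.

Lemma Y_shift s n y : Y y -> Y (shift s n y).
Proof.
  destruct HQ as (_ & _ & _ & Hfwd & Hsurj & _).
  induction n as [|n IH]; intro Hy; [exact Hy|].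
  apply IH in Hy. destruct s; [apply Hfwd, Hy|].
  destruct (Hsurj _ Hy) as [x [Hx Ex]].
  change (Y (shift false 1 (shift false n y))). rewrite <- Ex.
  change (Y (shift (negb true) 1 (shift true 1 x))). rewrite shift_cancel. exact Hx.
Qed.

Lemma W_shift_shift s n a b v : W (shift s n a) (shift s n b) (shift s n v) <-> W a b v.
Proof. unfold W. rewrite !dist_shift. reflexivity. Qed.

Lemma W_shift s n a b v : W (shift s n a) (shift s n b) v <-> W a b (shift (negb s) n v).
Proof. rewrite <- (shift_cancel_r s n v) at 1. apply W_shift_shift. Qed.

Lemma crossing_shift s n x y c d :
  crossing x y c d -> crossing (shift s n x) (shift s n y) (shift s n c) (shift s n d).
Proof. unfold crossing. rewrite !W_shift_shift. tauto. Qed.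

Lemma same_hp_shift s n x y x' y' : same_hp x y x' y' ->
  same_hp (shift s n x) (shift s n y) (shift s n x') (shift s n y').
Proof. intros [E | E]; [left | right]; intro v; rewrite !W_shift; apply E. Qed.

Lemma dist_shift_orbit s n x :
  dist x (shift s n x) <= n * (dist x (shift true 1 x) + dist x (shift false 1 x)).
Proof.
  induction n as [|n IH]; [cbn; rewrite dist_refl; lia|].
  pose proof (dist_triangle x (shift s n x) (shift s (n + 1) x)) as Htri.
  rewrite shift_add, dist_shift in Htri.
  rewrite <- Nat.add_1_r, shift_add, Nat.mul_add_distr_r.
  destruct s; lia.
Qed.

Lemma act_gpow g n v : act (gpow G g n) v = Nat.iter n (act g) v.
Proof.
  destruct Hact as (Hone & Hmul & _).
  induction n as [|n IH]; cbn; [apply Hone|]. rewrite Hmul, IH. reflexivity.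
Qed.

Lemma shift_true_no_fixpoint n v : 0 < n -> shift true n v <> v.
Proof.
  intros Hn Hfix. destruct HQ as [Hphi _]. apply Hphi, (Htf phi n Hn), (Hfree _ v).
  rewrite act_gpow. exact Hfix.
Qed.

Lemma orbit_not_listed m v (l : list V) : 0 < m -> ~ (forall k, In (shift true (m * k) v) l).
Proof.
  intro Hm. apply injective_not_listed. intros i j E.
  assert (Hij : forall i j, i < j -> shift true (m * i) v <> shift true (m * j) v).
  { intros i' j' Hlt E'. apply (shift_true_no_fixpoint (m * j' - m * i') v); [nia|].
    rewrite <- (shift_gap true (m * i') (m * j') v) by nia.
    rewrite <- E'. apply shift_cancel. }
  destruct (lt_eq_lt_dec i j) as [[Hlt | Heq] | Hgt]; [| exact Heq |];
    exfalso; [apply (Hij i j) | apply (Hij j i)]; auto.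
Qed.

Lemma Y_infinite : ~ exists l, forall v, Y v -> In v l.
Proof.
  intros [l Hl]. destruct HQ as (_ & [y Hy] & _).
  apply (orbit_not_listed 1 y l); [lia|]. intro k. apply Hl, Y_shift, Hy.
Qed.

Lemma Y_shift_reps : exists R, forall y, Y y -> exists r s n, In r R /\ y = shift s n r.
Proof.
  destruct HQ as (_ & _ & _ & _ & _ & [R HR]). exists R. intros y Hy.
  destruct (HR y Hy) as (r & n & Hr & [E | E]).
  - exists r, true, n. split; assumption.
  - exists r, false, n. split; [assumption|]. rewrite E. symmetry. apply (shift_cancel true).
Qed.

Definition stabilizes a b m := forall v, W a b (shift true m v) <-> W a b v.

Lemma stabilizes_of_same_hp a b m : adj a b -> 0 < m ->
  same_hp a b (shift true m a) (shift true m b) -> exists m', 0 < m' /\ stabilizes a b m'.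
Proof.
  intros Hab Hm [E | E].
  - exists m. split; [exact Hm|]. intro v. rewrite E. apply W_shift_shift.
  - assert (Hflip : forall v, W a b (shift true m v) <-> ~ W a b v).
    { intro v. rewrite E, W_shift_shift. apply W_compl, Hab. }
    exists (m + m). split; [lia|]. intro v. rewrite shift_add, !Hflip.
    split; [apply NNPP | tauto].
Qed.

Lemma stabilizes_shift a b m : stabilizes a b m ->
  forall s k v, W a b (shift s (m * k) v) <-> W a b v.
Proof.
  unfold stabilizes. intros Hstab.
  assert (Htrue : forall k v, W a b (shift true (m * k) v) <-> W a b v).
  { induction k as [|k IH]; intro v; [rewrite Nat.mul_0_r; reflexivity|].
    rewrite Nat.mul_succ_r, Nat.add_comm, shift_add, Hstab. apply IH. }
  intros [|] k v; [apply Htrue|].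
  rewrite <- (Htrue k). rewrite (shift_cancel false). reflexivity.
Qed.

Lemma stabilizes_hp_vertex a b m s k : Y a -> Y b -> adj a b -> stabilizes a b m ->
  hp_vertex adj Y a b (shift s (m * k) a).
Proof.
  intros Ya Yb Hab Hstab. apply hp_vertex_iff; [exact Hab|].
  exists (shift s (m * k) a), (shift s (m * k) b).
  repeat split; auto using Y_shift, adj_shift.
  left. rewrite (W_compl a b _ Hab), !(stabilizes_shift a b m Hstab).
  split; [apply W_left, Hab | rewrite <- (W_compl a b _ Hab); apply W_left, adj_sym, Hab].
Qed.

Lemma stabilizes_near_carrier a b m : Y a -> Y b -> adj a b -> 0 < m -> stabilizes a b m ->
  exists K, forall v, Y v -> exists u, hp_vertex adj Y a b u /\ dist v u <= K.
Proof.
  intros Ya Yb Hab Hm Hstab. destruct Y_shift_reps as [R HR].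
  exists (list_max (map (fun r => dist r a) R)
          + m * (dist a (shift true 1 a) + dist a (shift false 1 a))).
  intros v Hv. destruct (HR v Hv) as (r & s & n & Hr & ->).
  exists (shift s (m * (n / m)) a).
  split; [apply stabilizes_hp_vertex; assumption|].
  rewrite (Nat.div_mod n m) at 1 by lia. rewrite shift_add, dist_shift.
  pose proof (dist_triangle (shift s (n mod m) r) (shift s (n mod m) a) a) as Htri.
  rewrite dist_shift, (dist_sym (shift s (n mod m) a) a) in Htri.
  pose proof (le_list_max (fun r => dist r a) R r Hr).
  pose proof (dist_shift_orbit s (n mod m) a).
  pose proof (Nat.mod_upper_bound n m ltac:(lia)).
  assert (n mod m * (dist a (shift true 1 a) + dist a (shift false 1 a))
          <= m * (dist a (shift true 1 a) + dist a (shift false 1 a)))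
    by (apply Nat.mul_le_mono_r; lia).
  lia.
Qed.

Lemma stabilizes_not_compact a b m : Y a -> Y b -> adj a b -> 0 < m -> stabilizes a b m ->
  ~ compact_halfspace adj Y a b /\ ~ compact_halfspace adj Y b a.
Proof.
  intros Ya Yb Hab Hm Hstab.
  split; intros [l Hl]; [apply (orbit_not_listed m a l Hm) | apply (orbit_not_listed m b l Hm)];
    intro k; apply Hl, halfspace_iff; (split; [apply Y_shift; assumption|]).
  - rewrite (stabilizes_shift a b m Hstab). apply W_left, Hab.
  - rewrite (W_compl a b _ Hab), (stabilizes_shift a b m Hstab), <- (W_compl a b _ Hab).
    apply W_left, adj_sym, Hab.
Qed.

Lemma stabilizes_trivial a b m : Y a -> Y b -> adj a b -> 0 < m -> stabilizes a b m ->
  ~ deep_halfspace adj Y a b /\ ~ deep_halfspace adj Y b a.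
Proof.
  intros Ya Yb Hab Hm Hstab.
  destruct (stabilizes_near_carrier a b m Ya Yb Hab Hm Hstab) as [K HK].
  split; apply (not_deep_of_near_carrier _ _ K); [exact HK|].
  intros v Hv. destruct (HK v Hv) as [u [Hu Hvu]].
  exists u. split; [apply hp_vertex_swap|]; assumption.
Qed.

(* By cocompactness of <phi> on Y, a carrier edge far from a is the translate of an edge
   near a by a large power of phi. *)
Lemma carrier_translates_near a b : adj a b -> ~ finite_diam_hp adj Y a b ->
  exists K, forall N, exists s t c d, N <= t /\ dist a c <= K /\ adj c d /\
    crossing (shift s t a) (shift s t b) c d.
Proof.
  intros Hab Hunb. destruct Y_shift_reps as [R HR].
  set (tau := dist a (shift true 1 a) + dist a (shift false 1 a)).
  exists (list_max (map (dist a) R)). intro N.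
  destruct (carrier_unbounded a b Hunb (N * tau + list_max (map (dist a) R) + 2))
    as [u [Hu Hfar]].
  apply hp_vertex_iff in Hu as (c0 & d0 & Yc0 & _ & Hcd0 & Hcross & Hu); [|exact Hab].
  destruct (HR c0 Yc0) as (r & s & t & Hr & ->).
  exists (negb s), t, r, (shift (negb s) t d0).
  pose proof (le_list_max (dist a) R r Hr).
  assert (Hfar_c0 : N * tau + list_max (map (dist a) R) + 1 <= dist a (shift s t r)).
  { destruct Hu as [-> | ->]; [lia|].
    pose proof (dist_triangle a (shift s t r) d0). rewrite (dist_adj _ _ Hcd0) in *. lia. }
  repeat split.
  - pose proof (dist_triangle a (shift s t a) (shift s t r)) as Htri.
    rewrite dist_shift in Htri. pose proof (dist_shift_orbit s t a) as Horb. fold tau in Horb.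
    destruct (le_lt_dec N t) as [Hle | Hlt]; [exact Hle|].
    assert (t * tau <= N * tau) by (apply Nat.mul_le_mono_r; lia). lia.
  - assumption.
  - rewrite <- (shift_cancel s t r). apply adj_shift, Hcd0.
  - rewrite <- (shift_cancel s t r). apply crossing_shift, Hcross.
Qed.

(* Two of the translates near a cross the same edge, hence are the same hyperplane. *)
Lemma unbounded_stabilizes a b : adj a b -> ~ finite_diam_hp adj Y a b ->
  exists m, 0 < m /\ stabilizes a b m.
Proof.
  intros Hab Hunb. destruct (carrier_translates_near a b Hab Hunb) as [K HK].
  destruct (ball_finite a K) as [Lc HLc]. destruct (ball_finite a (S K)) as [Ld HLd].
  destruct (infinitely_often_in_list (list_prod [true; false] (list_prod Lc Ld))
    (fun e t => adj (fst (snd e)) (snd (snd e)) /\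
                crossing (shift (fst e) t a) (shift (fst e) t b) (fst (snd e)) (snd (snd e))))
    as ([s [c d]] & _ & Hoften).
  { intro N. destruct (HK N) as (s & t & c & d & HNt & Hc & Hcd & Hcross).
    exists (s, (c, d)), t. cbn [fst snd]. repeat split; try assumption.
    apply in_prod; [destruct s; cbn; tauto|]. apply in_prod; [apply HLc, Hc|].
    apply HLd. pose proof (dist_triangle a c d). rewrite (dist_adj _ _ Hcd) in *. lia. }
  destruct (Hoften 0) as (t1 & _ & Hcd & Hcross1).
  destruct (Hoften (S t1)) as (t2 & Ht12 & _ & Hcross2). cbn [fst snd] in *.
  assert (Hsame : same_hp (shift s t1 a) (shift s t1 b) (shift s t2 a) (shift s t2 b))
    by (apply (same_hp_of_crossing _ _ _ _ c d); auto using adj_shift).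
  apply (same_hp_shift (negb s) t1) in Hsame.
  rewrite !shift_cancel, !shift_gap in Hsame by lia.
  apply (stabilizes_of_same_hp a b (t2 - t1) Hab); [lia|].
  destruct s; [exact Hsame|].
  apply (same_hp_shift true (t2 - t1)) in Hsame.
  rewrite !(shift_cancel false) in Hsame.
  apply same_hp_sym; auto using adj_shift.
Qed.

Lemma unbounded_trivial a b : Y a -> Y b -> adj a b -> ~ finite_diam_hp adj Y a b ->
  ~ deep_halfspace adj Y a b /\ ~ deep_halfspace adj Y b a /\
  ~ compact_halfspace adj Y a b /\ ~ compact_halfspace adj Y b a.
Proof.
  intros Ya Yb Hab Hunb. destruct (unbounded_stabilizes a b Hab Hunb) as [m [Hm Hstab]].
  pose proof (stabilizes_trivial a b m Ya Yb Hab Hm Hstab).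
  pose proof (stabilizes_not_compact a b m Ya Yb Hab Hm Hstab). tauto.
Qed.

Lemma finite_diam_not_trivial a b : Y a -> Y b -> adj a b -> finite_diam_hp adj Y a b ->
  deep_halfspace adj Y a b \/ deep_halfspace adj Y b a.
Proof.
  intros Ya Yb Hab Hfin. apply NNPP. intro Hshallow. apply Y_infinite.
  destruct (shallow_compact a b Ya Yb Hab Hfin) as [l1 Hl1]; [tauto|].
  destruct (shallow_compact b a Yb Ya (adj_sym _ _ Hab) (finite_diam_swap a b Hab Hfin))
    as [l2 Hl2]; [tauto|].
  exists (l1 ++ l2). intros v Hv. apply in_or_app.
  destruct (halfspace_cover a b v Hab Hv); [left | right]; auto.
Qed.

End Quasiline.
End MedianGraph.

Theorem lemma5p5 (V : Type) (adj : V -> V -> Prop) (G : group)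
  (act : G -> V -> V) (HX : compact_npc_universal_cover adj G act)
  (Y : V -> Prop) (phi : G) (HQ : quasiline adj G act Y phi)
  (a b : V) (Ya : Y a) (Yb : Y b) (Hab : adj a b) :
  (trivial_hp adj Y a b <-> ~ finite_diam_hp adj Y a b) /\
  (half_essential_hp adj Y a b <->
     (compact_halfspace adj Y a b \/ compact_halfspace adj Y b a)) /\
  (essential_hp adj Y a b <->
     finite_diam_hp adj Y a b /\ ~ compact_halfspace adj Y a b /\
     ~ compact_halfspace adj Y b a).
Proof.
  destruct HX as (Hmed & Hlf & Hact & Hfree & Htf & _).
  unfold trivial_hp, half_essential_hp, essential_hp.
  destruct (classic (finite_diam_hp adj Y a b)) as [Hfin | Hunb].
  - pose proof (deep_iff_not_compact adj Hmed Hlf Y a b Ya Yb Hab Hfin).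
    pose proof (deep_iff_not_compact adj Hmed Hlf Y b a Yb Ya (adj_sym adj Hmed a b Hab)
                  (finite_diam_swap adj Hmed Y a b Hab Hfin)).
    pose proof (finite_diam_not_trivial adj Hmed Hlf Y G act Hact Hfree Htf phi HQ
                  a b Ya Yb Hab Hfin).
    destruct (classic (compact_halfspace adj Y a b)), (classic (compact_halfspace adj Y b a));
      tauto.
  - pose proof (unbounded_trivial adj Hmed Hlf Y G act Hact Hfree Htf phi HQ
                  a b Ya Yb Hab Hunb).
    tauto.
Qed.
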